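(* For every integer $n>1$ and every $k\in\mathbb{Z}$, $$(\Lambda_{Ld}\ast\beta_k)(n)=Ld(n)\beta_k(n)-\beta_{k-1}(n).$$
   Context: $Ld(n)=\sum_{p^\alpha\parallel n}\frac{\alpha}{p}$ (sum over primes $p\mid n$, $\alpha$ the exact exponent of $p$ in $n$). $\Lambda_{Ld}(n)=\frac1p$ if $n=p^k$ for some prime $p$ and integer $k\geq1$, and $0$ otherwise. $\beta_k(n)=\sum_{p\mid n}p^k$ (sum over distinct primes dividing $n$). $\ast$ is Dirichlet convolution. *)

From mathcomp Require Import all_boot all_order all_algebra.
Set Implicit Arguments. Unset Strict Implicit. Unset Printing Implicit Defensive.
Import Order.TTheory GRing.Theory Num.Theory.
Local Open Scope ring_scope.

Definition dconv (f g : nat -> rat) (n : nat) : rat :=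
  \sum_(d <- divisors n) f d * g (n %/ d)%N.

Definition Ld (n : nat) : rat :=
  \sum_(p <- primes n) (logn p n)%:R / p%:R.

Definition LambdaLd (n : nat) : rat :=
  match [pick p : 'I_n.+1 | prime p &&
           [exists k : 'I_n.+1, (0 < k)%N && (n == p ^ k)%N]] with
  | Some p => (nat_of_ord p)%:R^-1
  | None => 0
  end.

Definition beta (k : int) (n : nat) : rat :=
  \sum_(p <- primes n) (p%:R : rat) ^ k.

From mathcomp Require Import all_boot all_order all_algebra.
Import GRing.Theory Num.Theory.

(* Lambda_Ld vanishes off prime powers, so (Lambda_Ld * beta_k)(n) is a sum over
   the p^j with p | n and 1 <= j <= v_p(n), with weight 1/p.  Dividing n by p^j
   keeps every prime divisor of n unless j = v_p(n), when exactly p is lost;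
   hence sum_j beta_k(n/p^j) = v_p(n) beta_k(n) - p^k, and multiplying by 1/p
   and summing over p | n gives Ld(n) beta_k(n) - beta_(k-1)(n). *)

Definition prime_power_divisors (n : nat) : seq nat :=
  [seq p ^ j.+1 | p <- primes n, j <- iota 0 (logn p n)].

Lemma mem_prime_power_divisors n d :
  reflect (exists p j, [/\ p \in primes n, j < logn p n & d = p ^ j.+1])
          (d \in prime_power_divisors n).
Proof.
by apply: (iffP allpairsPdep) => -[p [j [p_n j_lt ->]]]; exists p, j;
  rewrite mem_iota in j_lt *.
Qed.

Lemma prime_power_divisors_sub n : {subset prime_power_divisors n <= divisors n}.
Proof.
move=> _ /mem_prime_power_divisors[p [j [p_n j_lt ->]]].
move: p_n; rewrite mem_primes => /and3P[p_pr n_gt0 _].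
by rewrite -dvdn_divisors // pfactor_dvdn.
Qed.

Lemma uniq_prime_power_divisors n : uniq (prime_power_divisors n).
Proof.
apply: allpairs_uniq_dep => [|p _|]; rewrite ?primes_uniq ?iota_uniq //.
move=> _ _ /allpairsPdep[p [j [p_n _ ->]]] /allpairsPdep[q [i [q_n _ ->]]] /=.
have p_pr : prime p by move: p_n; rewrite mem_primes => /andP[].
have q_pr : prime q by move: q_n; rewrite mem_primes => /andP[].
move=> E; have p_q : p = q by rewrite -(pdiv_pfactor j p_pr) E pdiv_pfactor.
by move: E; rewrite p_q => /eqP; rewrite eqn_exp2l ?prime_gt1 // => /eqP[->].
Qed.

Local Open Scope ring_scope.

Lemma dconv_prime_power_support (f g : nat -> rat) n : (0 < n)%N ->
    (forall d, f d != 0 -> exists p j, prime p /\ d = (p ^ j.+1)%N) ->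
  dconv f g n =
    \sum_(p <- primes n) \sum_(j < logn p n) f (p ^ j.+1)%N * g (n %/ p ^ j.+1)%N.
Proof.
move=> n_gt0 f_supp; rewrite /dconv (bigID (mem (prime_power_divisors n))) /=.
rewrite [X in _ + X]big1_seq ?addr0 => [|d /andP[d_npp d_n]]; last first.
  suff /eqP -> : f d == 0 by rewrite mul0r.
  apply: contraR d_npp => /f_supp[p [j [p_pr d_eq]]]; apply/mem_prime_power_divisors.
  rewrite -dvdn_divisors // d_eq in d_n.
  exists p, j; rewrite -pfactor_dvdn // d_n mem_primes p_pr n_gt0.
  by rewrite (dvdn_trans _ d_n) // dvdn_exp.
rewrite -big_filter (perm_big (prime_power_divisors n)); last first.
  apply: uniq_perm; rewrite ?filter_uniq ?divisors_uniq ?uniq_prime_power_divisors //.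
  by move=> d; rewrite mem_filter andb_idr // => /prime_power_divisors_sub.
rewrite big_allpairs_dep; apply: eq_bigr => p _.
by rewrite -val_enum_ord big_map big_enum.
Qed.

Lemma LambdaLd_prime_power_support d :
  LambdaLd d != 0 -> exists p j, prime p /\ d = (p ^ j.+1)%N.
Proof.
rewrite /LambdaLd; case: pickP => [p /andP[p_pr /existsP[[[|i] _]]] | _] //=.
by move=> /eqP d_eq _; exists p, i.
Qed.

Lemma LambdaLd_pfactor p j : prime p -> LambdaLd (p ^ j.+1) = p%:R^-1.
Proof.
move=> p_pr; rewrite /LambdaLd; case: pickP => [q | no_pick].
  case/andP=> q_pr /existsP[[[|i] _]] //= /eqP E.
  suff -> : nat_of_ord q = p by [].
  by rewrite -(pdiv_pfactor i q_pr) -E pdiv_pfactor.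
have p_lt : (p < (p ^ j.+1).+1)%N by rewrite ltnS expnS leq_pmulr ?expn_gt0 ?prime_gt0.
have j_lt : (j.+1 < (p ^ j.+1).+1)%N by rewrite ltnS ltnW // ltn_expl ?prime_gt1.
have := no_pick (Ordinal p_lt); rewrite /= p_pr => /existsPn/(_ (Ordinal j_lt)).
by rewrite /= eqxx.
Qed.

Lemma primes_divn_pfactor n p j : (j < logn p n)%N -> primes (n %/ p ^ j) = primes n.
Proof.
move=> j_lt; have: p \in primes n by rewrite -logn_gt0 (leq_ltn_trans _ j_lt).
rewrite mem_primes => /and3P[p_pr n_gt0 _].
have pj_n : (p ^ j %| n)%N by rewrite pfactor_dvdn // ltnW.
apply/eq_primes => q; rewrite -!logn_gt0 logn_div // lognX (logn_prime _ p_pr).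
case: eqP => [->|_] /=; rewrite ?muln0 ?subn0 // muln1 subn_gt0 j_lt.
by rewrite (leq_ltn_trans _ j_lt).
Qed.

Lemma beta_divn_pfactor_logn k n p : p \in primes n ->
  beta k (n %/ p ^ logn p n) = beta k n - p%:R ^ k.
Proof.
move=> p_n; move: (p_n); rewrite mem_primes => /and3P[_ n_gt0 _].
rewrite -p_part -{1}(partnC p n_gt0) mulKn ?part_gt0 // /beta primes_part big_filter.
rewrite [in RHS](bigD1_seq p) ?primes_uniq //= addrC addrK.
by apply: eq_bigl => q; rewrite !inE.
Qed.

Lemma sum_beta_divn_pfactor k n p : p \in primes n ->
  \sum_(j < logn p n) beta k (n %/ p ^ j.+1) = (logn p n)%:R * beta k n - p%:R ^ k.
Proof.
move=> p_n; have := p_n; rewrite -logn_gt0.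
case L_def: (logn p n) => [//|L] _.
rewrite big_ord_recr /= -L_def beta_divn_pfactor_logn //.
rewrite (eq_bigr (fun=> beta k n)) => [|j _]; last first.
  by rewrite /beta primes_divn_pfactor // L_def ltnS.
by rewrite sumr_const card_ord addrA -mulrSr L_def mulr_natl.
Qed.

Theorem theorem3p3 (n : nat) (k : int) : (1 < n)%N ->
  dconv LambdaLd (beta k) n = Ld n * beta k n - beta (k - 1) n.
Proof.
move=> n_gt1; rewrite dconv_prime_power_support ?(ltnW n_gt1) //; last first.
  exact: LambdaLd_prime_power_support.
rewrite /Ld big_distrl [beta (k - 1) n]/beta -sumrB; apply: eq_big_seq => p p_n.
have p_pr : prime p by move: p_n; rewrite mem_primes => /andP[].
have p_neq0 : (p%:R : rat) != 0 by rewrite pnatr_eq0 -lt0n prime_gt0.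
under eq_bigr => j _ do rewrite LambdaLd_pfactor //.
rewrite -mulr_sumr sum_beta_divn_pfactor // mulrBr.
by rewrite expfzDr // exprN1 mulrA (mulrC p%:R^-1) (mulrC (p%:R ^ k)).
Qed.
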